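(* Let $\rho \in [\frac{1}{2},1)$. The running time of $\mathrm{BasketSort}(S, w_S)$ with shrinking rate $\rho$, on a sequence $S$ of $m$ elements with $1 \le w_S \le m$, is $O\left(\frac{m \cdot w_S}{1-\rho}\right)$.
   Context: Algorithm BasketSort$(S,w_S)$ with shrinking rate $\rho$: set $S_{\lfloor w_S\rfloor} = S$ and $w = \lfloor w_S \rfloor$. While $w \ge 1$: partition the current sequence $S_w$ into $\lceil m/w \rceil$ baskets $B_1, B_2,\dots$ of consecutive elements, each of the first $\lceil m/w\rceil - 1$ having exactly $w$ elements and the last at most $w$; for each $i$, let $B = \bigcup_{j=\max\{1,i-3\}}^{\min\{i+3,\lceil m/w\rceil\}} B_j$, for each $x\in B$ let $\mathrm{score}(x)$ be the number of $y \in B\setminus\{x\}$ such that the (noisy) comparison reports $y$ smaller than $x$, let $A$ be $B$ stably sorted in non-decreasing order of score, and for each $x \in B_i$ set $\tau_w(x) = \max\{0,i-4\}\cdot w + \mathrm{pos}(x,A)$ (position of $x$ in $A$); then let $S_{\lfloor \rho w\rfloor}$ be $S_w$ stably sorted in non-decreasing order of $\tau_w$, and set $w \leftarrow \lfloor \rho w \rfloor$. Return $S_0$. Each comparison takes constant time. *)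

From mathcomp Require Import all_boot all_order all_algebra.
Set Implicit Arguments. Unset Strict Implicit. Unset Printing Implicit Defensive.
Import Order.TTheory GRing.Theory Num.Theory.

(* Elements are tagged with their
   position in the current sequence S_w.  The (noisy) comparison oracle is an
   arbitrary function [q : nat -> T -> T -> bool]: [q t y x] is the answer of the
   t-th comparison query "is y reported smaller than x?", so answers may be
   arbitrary/inconsistent (adversarial noise).  The returned cost counts
   elementary unit-time steps:
     - one unit per comparison,
     - |B| units per window B (computing scores and stably sorting B by score,
       e.g. by counting sort, scores lie in [0,|B|)),
     - m + 1 units per round (partitioning, computing the tau_w, and stably
       sorting S_w by tau_w, e.g. by counting sort, tau_w lies in [1, m+O(w)]). *)

Section BasketSort.
Variable T : Type.
Variable q : nat -> T -> T -> bool.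

Fixpoint score_one (t : nat) (x : nat * T) (ys : seq (nat * T)) : nat * nat :=
  match ys with
  | [::] => (0, t)
  | y :: ys' =>
      if y.1 == x.1 then score_one t x ys'
      else let: (sc, t') := score_one t.+1 x ys' in (sc + q t y.2 x.2, t')
  end.

Fixpoint scores (t : nat) (xs win : seq (nat * T)) : seq ((nat * T) * nat) * nat :=
  match xs with
  | [::] => ([::], t)
  | x :: xs' =>
      let: (sc, t1) := score_one t x win in
      let: (rest, t2) := scores t1 xs' win in
      ((x, sc) :: rest, t2)
  end.

Definition round (t : nat) (s : seq T) (w : nat) : seq T * nat * nat :=
  let m := size s in
  let sidx := zip (iota 0 m) s in
  let k := (m + w.-1) %/ w in
  let step (acc : seq ((nat * T) * nat) * nat * nat) (i : nat) :=
    let: (taus, t0, c0) := acc in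
    let lo := (i - 3) * w in                 (* = max{0, i-3} * w, 0-indexed i *)
    let hi := minn ((i + 4) * w) m in
    let win := take (hi - lo) (drop lo sidx) in
    let: (sc, t1) := scores t0 win win in
    let A := sort (fun a b : (nat * T) * nat => a.2 <= b.2) sc in
    let posA (x : nat * T) := (find (fun a : (nat * T) * nat => a.1.1 == x.1) A).+1 in
    let bsk := take (minn ((i + 1) * w) m - i * w) (drop (i * w) sidx) in
    (taus ++ [seq (x, lo + posA x) | x <- bsk], t1, c0 + (t1 - t0) + size win) in
  let: (taus, t', c) := foldl step ([::], t, 0) (iota 0 k) in
  ([seq a.1.2 | a <- sort (fun a b : (nat * T) * nat => a.2 <= b.2) taus], t', c + m + 1).

(* the loop "while w >= 1", with next width [nxt w] = floor (rho w);
   [fuel] bounds the number of rounds *)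
Fixpoint bs_loop (nxt : nat -> nat) (fuel t : nat) (s : seq T) (w cost : nat)
  : seq T * nat :=
  match fuel with
  | 0 => (s, cost)
  | f.+1 =>
      if w == 0 then (s, cost)
      else let: (s', t', c) := round t s w in bs_loop nxt f t' s' (nxt w) (cost + c)
  end.
End BasketSort.

(* BasketSort(S, w_S) with shrinking rate rho: returns (S_0, running time).
   The fuel floor(w_S)+1 suffices since floor(rho w) < w for rho < 1, w >= 1. *)
Definition basket_sort {R : archiRealFieldType} (rho : R) (T : Type)
  (q : nat -> T -> T -> bool) (S : seq T) (wS : R) : seq T * nat :=
  let w0 := Num.truncn wS in
  bs_loop q (fun w => Num.truncn (rho * w%:R)) w0.+1 0 S w0 0.

Definition basket_sort_time {R : archiRealFieldType} (rho : R) (T : Type)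
  (q : nat -> T -> T -> bool) (S : seq T) (wS : R) : nat :=
  (basket_sort rho q S wS).2.

(** A round with basket width [w] on [m] elements scores ⌈m/w⌉ windows of at
    most [7 w] elements with at most [(7 w)^2] comparisons each, so it costs
    [O(m w)] and leaves the length [m] unchanged.  Since the next width is at
    most [rho w], the quantity "cost so far + C m w / (1 - rho)" never
    increases from one round to the next (because [C m w (1 - rho) + C m (rho w)
    = C m w]), which bounds the total by [C m w_S / (1 - rho)]. *)

From mathcomp Require Import all_boot all_order all_algebra.
From mathcomp Require Import zify lra.
Import Order.TTheory GRing.Theory Num.Theory.

Set Implicit Arguments.
Unset Strict Implicit.
Unset Printing Implicit Defensive.

Lemma foldl_iota_ind {A : Type} (P : nat -> A -> Prop) (step : A -> nat -> A) a n :
  P 0 a -> (forall i acc, P i acc -> P i.+1 (step acc i)) ->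
  P n (foldl step a (iota 0 n)).
Proof.
move=> P0 Pstep; elim: n => [//|n IHn].
by rewrite -addn1 iotaD foldl_cat /= addn1; apply: Pstep.
Qed.

Section Round.
Variables (T : Type) (q : nat -> T -> T -> bool).

Lemma score_one_counter_le t (x : nat * T) ys :
  (score_one q t x ys).2 <= t + size ys.
Proof.
elim: ys t => [|y ys IH] t /=; first by rewrite addn0.
case: ifP => _; first by have := IH t; lia.
by have := IH t.+1; case: score_one => sc t' /=; lia.
Qed.

Lemma scores_counter_le t (xs win : seq (nat * T)) :
  (scores q t xs win).2 <= t + size xs * size win.
Proof.
elim: xs t => [|x xs IH] t /=; first by rewrite addn0.
have := score_one_counter_le t x win; case: score_one => sc t1 /= le_t1.
by have := IH t1; case: scores => r t2 /= le_t2; rewrite mulSn; lia.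
Qed.

(* [114 = 2 * 56 + 2]: there are [k <= 2 m / w] windows costing at most
   [7 w (7 w + 1) <= 56 w^2] each, and the bookkeeping [m + 1] is at most [2 m w]. *)
Lemma round_size_cost t (s : seq T) w : 0 < w -> w <= size s ->
  size (round q t s w).1.1 = size s /\ (round q t s w).2 <= 114 * size s * w.
Proof.
move=> w_gt0 w_le_m; rewrite /round.
set m := size s; set sidx := zip _ _; set k := _ %/ w; set step := fun acc i => _.
have size_sidx : size sidx = m by rewrite size_zip size_iota minnn.
have fold_inv : size (foldl step ([::], t, 0) (iota 0 k)).1.1 = minn (k * w) m /\
    (foldl step ([::], t, 0) (iota 0 k)).2 <= k * (7 * w * (7 * w).+1).
  apply: (foldl_iota_ind (P := fun i acc =>
      size acc.1.1 = minn (i * w) m /\ acc.2 <= i * (7 * w * (7 * w).+1))).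
    by rewrite /= min0n.
  move=> i [[taus t0] c0] /= [size_taus cost_c0]; rewrite /step.
  set win := take _ _.
  have size_win : size win <= 7 * w.
    rewrite /win size_take_min size_drop size_sidx.
    have : minn ((i + 4) * w) m <= (i + 4) * w by apply: geq_minl.
    nia.
  have := scores_counter_le t0 win win; case: scores => sc t1 /= le_t1.
  rewrite size_cat size_map size_take_min size_drop size_sidx.
  split; [lia | nia].
have k_ceil : m <= k * w <= m + w.-1.
  rewrite leq_divM andbT.
  by have := divn_eq (m + w.-1) w; have := ltn_pmod (m + w.-1) w_gt0; lia.
move: fold_inv; case: foldl => [[taus t'] c] /= [size_taus cost_c].
rewrite size_map size_sort; split; [lia | nia].
Qed.

End Round.

Local Open Scope ring_scope.

Lemma bs_loop_time_le (R : realFieldType) (rho : R) (nxt : nat -> nat)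
    (T : Type) (q : nat -> T -> T -> bool) :
  rho < 1 -> (forall w, (nxt w)%:R <= rho * w%:R) ->
  forall fuel t (s : seq T) w cost, (w <= size s)%N ->
  (bs_loop q nxt fuel t s w cost).2%:R
    <= cost%:R + (114 * size s * w)%N%:R / (1 - rho).
Proof.
move=> rho_lt1 nxt_le; have one_rho_gt0 : 0 < 1 - rho by rewrite subr_gt0.
have cost_le_self n cost : cost%:R <= cost%:R + n%:R / (1 - rho) :> R.
  by rewrite lerDl divr_ge0 // ltW.
elim=> [|fuel IH] t s w cost w_le_m /=; first exact: cost_le_self.
have [-> /=|w_neq0] := eqVneq w 0; first exact: cost_le_self.
have w_gt0 : (0 < w)%N by rewrite lt0n.
have [size_s' cost_le] := round_size_cost q t w_gt0 w_le_m.
move: size_s' cost_le; case: round => [[s' t'] c] /= size_s' cost_le.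
have nxt_lt_w : (nxt w < w)%N.
  rewrite -(ltr_nat R); apply: le_lt_trans (nxt_le w) _.
  by rewrite gtr_pMl ?ltr0n.
apply: le_trans (IH t' s' (nxt w) (cost + c) _) _.
  by rewrite size_s' (leq_trans (ltnW nxt_lt_w)).
rewrite size_s' natrD -addrA lerD2l ler_pdivlMr // mulrDl divfK ?gt_eqF //.
rewrite !(natrM _ (114 * size s)); set A := (114 * size s)%:R.
have A_ge0 : 0 <= A := ler0n _ _.
have := nxt_le w; move: cost_le; rewrite -(ler_nat R) natrM -/A; nra.
Qed.

Theorem lemma5p1 (R : archiRealFieldType) :
  exists C : R, 0 < C /\
    forall (rho : R), 1 / 2 <= rho -> rho < 1 ->
    forall (T : Type) (q : nat -> T -> T -> bool) (S : seq T) (wS : R),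
      1 <= wS -> wS <= (size S)%:R ->
      (basket_sort_time rho q S wS)%:R <= C * ((size S)%:R * wS / (1 - rho)).
Proof.
exists 114%:R; split => // rho half_le_rho rho_lt1 T q S wS one_le_wS wS_le_m.
have rho_ge0 : 0 <= rho by apply: le_trans half_le_rho; rewrite divr_ge0.
have wS_ge0 : 0 <= wS by apply: le_trans one_le_wS.
have w0_le_m : (Num.truncn wS <= size S)%N.
  by rewrite -[X in (_ <= X)%N](@natrK R); apply: le_truncn.
have nxt_le w : (Num.truncn (rho * w%:R))%:R <= rho * w%:R.
  by rewrite truncn_le mulr_ge0.
apply: le_trans (bs_loop_time_le q rho_lt1 nxt_le _ _ _ w0_le_m) _.
rewrite add0r !natrM -!mulrA ler_pM2l // ler_pM2l ?ltr0n ?lt0n ?size_eq0; last first.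
  by apply: contraTneq wS_le_m => ->; rewrite -ltNge (lt_le_trans ltr01).
by rewrite ler_pM2r ?invr_gt0 ?subr_gt0 // truncn_le.
Qed.
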